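(* For any $a\geq b>0$, the events $\{\tau_a<\widehat{\tau}_b\}$ and $\{a-b<Y_{\widehat{\tau}_b}\}$ coincide almost surely.
   Context: Let $X$ be a spectrally negative Lévy process with non-monotone paths. Let $\overline{X}_t=\sup_{s\leq t}X_s$, $\underline{X}_t=\inf_{s\leq t}X_s$, $Y_t=\overline{X}_t-X_t$, $\widehat{Y}_t=X_t-\underline{X}_t$, $\tau_a=\inf\{t\geq0:Y_t>a\}$, $\widehat{\tau}_b=\inf\{t\geq0:\widehat{Y}_t>b\}$. *)

From HB Require Import structures.
From mathcomp Require Import all_boot all_order all_algebra.
From mathcomp Require Import all_classical all_reals all_analysis.
Set Implicit Arguments. Unset Strict Implicit. Unset Printing Implicit Defensive.
Import Order.TTheory GRing.Theory Num.Theory.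
Import numFieldNormedType.Exports.
Local Open Scope classical_set_scope.
Local Open Scope ring_scope.

Section Paths.
Variable R : realType.

Definition cadlag (f : R -> R) : Prop :=
  (forall t, 0 <= t -> f x @[x --> t^'+] --> f t) /\
  (forall t, 0 < t -> cvg (f x @[x --> t^'-])).

Definition no_positive_jumps (f : R -> R) : Prop :=
  forall t, 0 < t -> f t - lim (f x @[x --> t^'-]) <= 0.

Definition monotone_path (f : R -> R) : Prop :=
  (forall s t, 0 <= s -> s <= t -> f s <= f t) \/
  (forall s t, 0 <= s -> s <= t -> f t <= f s).

Definition run_sup (f : R -> R) (t : R) : R := sup [set f s | s in `[0, t]].
Definition run_inf (f : R -> R) (t : R) : R := inf [set f s | s in `[0, t]].

(** Y_t = sup_{s<=t} X_s - X_t  and  \hat Y_t = X_t - inf_{s<=t} X_s *)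
Definition drawdown (f : R -> R) (t : R) : R := run_sup f t - f t.
Definition drawup (f : R -> R) (t : R) : R := f t - run_inf f t.

(** inf {t >= 0 : g t > a}, in the extended reals (= +oo if the set is empty) *)
Definition first_exceed (g : R -> R) (a : R) : \bar R :=
  ereal_inf [set t%:E | t in [set t | 0 <= t /\ a < g t]].

End Paths.

Section Levy.
Context {d : measure_display} {T : measurableType d} {R : realType}.
Variable P : probability T R.
Variable X : R -> T -> R.

Definition stationary_increments : Prop :=
  forall s t, 0 <= s -> s <= t -> forall B : set R, measurable B ->
    P [set w | X t w - X s w \in B] = P [set w | X (t - s) w \in B].

Definition independent_increments : Prop :=
  forall (n : nat) (t : nat -> R) (B : nat -> set R),
    0 <= t 0%N -> (forall i, t i <= t i.+1) -> (forall i, measurable (B i)) ->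
    P (\bigcap_(i in [set k | (k < n)%N]) [set w | X (t i.+1) w - X (t i) w \in B i])
    = (\prod_(i < n) P [set w | (X (t i.+1) w - X (t i) w)%R \in B i])%E.

Definition is_levy_process : Prop :=
  (forall t, measurable_fun setT (X t)) /\
  {ae P, forall w, X 0 w = 0} /\
  {ae P, forall w, cadlag (X ^~ w)} /\
  stationary_increments /\ independent_increments.

Definition is_spec_neg_levy_nonmonotone : Prop :=
  is_levy_process /\
  {ae P, forall w, no_positive_jumps (X ^~ w)} /\
  {ae P, forall w, ~ monotone_path (X ^~ w)}.

End Levy.

Definition tau {R : realType} {T : Type} (X : R -> T -> R) (a : R) (w : T) : \bar R :=
  first_exceed (drawdown (X ^~ w)) a.
Definition tauhat {R : realType} {T : Type} (X : R -> T -> R) (b : R) (w : T) : \bar R :=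
  first_exceed (drawup (X ^~ w)) b.

(* Let s be the first time the drawup of the path exceeds b. Right-continuity
   gives drawup s >= b, and since the path has no positive jumps the drawup
   cannot jump over b, so drawup s = b: at time s the path sits exactly b above
   its running infimum. Hence a drawdown larger than a >= b before s forces
   sup - X_s > a - b at s; conversely, if sup - inf > a on [0, s], the
   (approximate) maximiser must come before the minimiser, since otherwise the
   drawup would exceed a >= b before s, and this gives a drawdown larger than a
   before s.
   It remains to see that s is finite almost surely. A non-monotone path forces
   P(X_L > b) > 0 for some L (otherwise X decreases along every grid, hence
   everywhere by right-continuity), and then the independent, identically
   distributed increments of X along the grid L N all stay below b with
   probability zero. *)

From HB Require Import structures.
From mathcomp Require Import all_boot all_order all_algebra.
From mathcomp Require Import all_classical all_reals all_analysis.
From mathcomp Require Import lra measurable_realfun.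
Set Implicit Arguments.
Unset Strict Implicit.
Unset Printing Implicit Defensive.
Import Order.TTheory GRing.Theory Num.Theory.
Import numFieldNormedType.Exports.
Local Open Scope classical_set_scope.
Local Open Scope ring_scope.

Section neighbourhoods.
Variable R : realType.

Lemma near_right_itv (t : R) (P : R -> Prop) : (\forall y \near t^'+, P y) ->
  exists2 d : R, 0 < d & forall y, t < y -> y < t + d -> P y.
Proof.
move=> /nbhs_ballP [e e0 He]; exists e => // y ty yt.
apply: He => //; rewrite /ball /= ltr_distlC; apply/andP; split => //.
by rewrite (lt_trans _ ty) // ltrBlDr ltrDl.
Qed.

Lemma near_left_itv (t : R) (P : R -> Prop) : (\forall y \near t^'-, P y) ->
  exists2 d : R, 0 < d & forall y, t - d < y -> y < t -> P y.
Proof.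
move=> /nbhs_ballP [e e0 He]; exists e => // y ty yt.
apply: He => //; rewrite /ball /= ltr_distlC; apply/andP; split => //.
by rewrite (lt_trans yt) // ltrDl.
Qed.

Lemma cvg_norm_le_near (F : set_system R) {FF : Filter F} (f : R -> R) (l : R) :
  f @ F --> l -> \forall y \near F, `|f y| <= `|l| + 1.
Proof.
move=> /cvgrPdist_lt /(_ 1 ltr01); apply: filterS => y hy.
have -> : f y = l - (l - f y) by rewrite opprB addrC subrK.
by rewrite (le_trans (ler_normB _ _)) // lerD2l ltW.
Qed.

End neighbourhoods.

Section cadlag_bounded.
Variable R : realType.
Variable f : R -> R.

Definition bounded_on (t : R) := exists M, forall x, 0 <= x -> x <= t -> `|f x| <= M.

Lemma bounded_on_left_limit m : cvg (f x @[x --> m^'-]) ->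
  (forall d, 0 < d -> exists2 x, m - d < x & bounded_on x) -> bounded_on m.
Proof.
move=> /cvg_norm_le_near /near_left_itv [d d0 Hd] /(_ d d0) [x dx [Mx HMx]].
exists (Num.max Mx (Num.max (`|lim (f x @[x --> m^'-])| + 1) `|f m|)) => y y0 ym.
rewrite !le_max; have [yx|xy] := leP y x; first by rewrite HMx.
have [ylm|my] := ltP y m; first by rewrite (Hd y (lt_trans dx xy)) ?orbT.
have -> : y = m by apply/eqP; rewrite eq_le ym my.
by rewrite lexx !orbT.
Qed.

Lemma bounded_on_right_limit m : f x @[x --> m^'+] --> f m -> bounded_on m ->
  exists2 d, 0 < d & forall x, x < m + d -> bounded_on x.
Proof.
move=> /cvg_norm_le_near /near_right_itv [d d0 Hd] [M HM].
exists d => // x xd; exists (Num.max M (`|f m| + 1)) => y y0 yx.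
rewrite le_max; have [ym|my] := leP y m; first by rewrite HM.
by rewrite Hd ?orbT // (le_lt_trans yx).
Qed.

Lemma cadlag_bounded_on t : cadlag f -> 0 <= t -> bounded_on t.
Proof.
move=> [fr fl] t0.
pose A := [set x | 0 <= x <= t /\ bounded_on x].
have A0 : A 0.
  split; first by rewrite lexx t0.
  exists `|f 0| => y y0 y0'.
  by have -> : y = 0 by apply/eqP; rewrite eq_le y0' y0.
have ubA : ubound A t by move=> x [/andP[_ ->]].
have supA : has_sup A by split; [exists 0 | exists t].
have m0 : 0 <= sup A by apply: ub_le_sup A0; exists t.
have mt : sup A <= t by apply: ge_sup => //; exists 0.
have bm : bounded_on (sup A).
  have [->|mneq0] := eqVneq (sup A) 0; first by case: A0.
  apply: bounded_on_left_limit; first by apply: fl; rewrite lt_neqAle eq_sym mneq0.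
  by move=> d d0; have [x [_ bx] dx] := sup_adherent d0 supA; exists x.
suff -> : t = sup A by [].
apply/eqP; rewrite eq_le mt andbT leNgt; apply/negP => mlt.
have [d d0 bd] := @bounded_on_right_limit (sup A) (fr _ m0) bm.
pose z := Num.min (sup A + d / 2) t.
have Az : A z.
  split; first by rewrite ge_min lexx orbT andbT (le_trans m0) // le_min mt ltW // ltrDl divr_gt0.
  by apply: bd; rewrite gt_min ltrD2l ltr_pdivrMr // ltr_pMr // ltr1n.
have : z <= sup A by apply: ub_le_sup Az; exists t.
by rewrite leNgt lt_min mlt andbT ltrDl divr_gt0.
Qed.

End cadlag_bounded.

Section running_extrema.
Variable R : realType.
Variable f : R -> R.

Lemma image_itv0_mem (t x : R) : 0 <= x -> x <= t -> [set f s | s in `[0, t]] (f x).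
Proof. by move=> x0 xt; exists x => //=; rewrite in_itv /= x0 xt. Qed.

Lemma image_itv0P (t y : R) :
  [set f s | s in `[0, t]] y -> exists x, [/\ 0 <= x, x <= t & f x = y].
Proof. by case=> x /=; rewrite in_itv /= => /andP[x0 xt] <-; exists x. Qed.

Lemma run_sup_le t m : 0 <= t -> (forall x, 0 <= x -> x <= t -> f x <= m) ->
  run_sup f t <= m.
Proof.
move=> t0 h; apply: ge_sup; first by exists (f 0); apply: image_itv0_mem.
by move=> y /image_itv0P [x [x0 xt <-]]; apply: h.
Qed.

Lemma run_inf_ge t m : 0 <= t -> (forall x, 0 <= x -> x <= t -> m <= f x) ->
  m <= run_inf f t.
Proof.
move=> t0 h; apply: lb_le_inf; first by exists (f 0); apply: image_itv0_mem.
by move=> y /image_itv0P [x [x0 xt <-]]; apply: h.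
Qed.

Hypothesis fc : cadlag f.

Lemma image_itv0_bounded t : 0 <= t ->
  has_ubound [set f s | s in `[0, t]] /\ has_lbound [set f s | s in `[0, t]].
Proof.
move=> t0; have [M HM] := cadlag_bounded_on fc t0.
split; [exists M | exists (- M)] => y /image_itv0P [x [x0 xt <-]].
  by rewrite (le_trans (ler_norm _)) // HM.
by rewrite lerNl (le_trans _ (HM _ x0 xt)) // -normrN ler_norm.
Qed.

Lemma run_sup_ge t x : 0 <= x -> x <= t -> f x <= run_sup f t.
Proof.
move=> x0 xt; apply: ub_le_sup; last exact: image_itv0_mem.
by case: (image_itv0_bounded (le_trans x0 xt)).
Qed.

Lemma run_inf_le t x : 0 <= x -> x <= t -> run_inf f t <= f x.
Proof.
move=> x0 xt; apply: ge_inf; last exact: image_itv0_mem.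
by case: (image_itv0_bounded (le_trans x0 xt)).
Qed.

Lemma run_sup_adherent t e : 0 <= t -> 0 < e ->
  exists x, [/\ 0 <= x, x <= t & run_sup f t - e < f x].
Proof.
move=> t0 e0; have [ub _] := image_itv0_bounded t0.
have hs : has_sup [set f s | s in `[0, t]].
  by split => //; exists (f 0); apply: image_itv0_mem.
by have [_ /image_itv0P [x [x0 xt <-]] hx] := sup_adherent e0 hs; exists x.
Qed.

Lemma run_inf_adherent t e : 0 <= t -> 0 < e ->
  exists x, [/\ 0 <= x, x <= t & f x < run_inf f t + e].
Proof.
move=> t0 e0; have [_ lb] := image_itv0_bounded t0.
have hi : has_inf [set f s | s in `[0, t]].
  by split => //; exists (f 0); apply: image_itv0_mem.
by have [_ /image_itv0P [x [x0 xt <-]] hx] := inf_adherent e0 hi; exists x.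
Qed.

End running_extrema.

Section first_exceed.
Variable R : realType.
Variables (g : R -> R) (a : R).

Lemma first_exceed_ge0 : (0 <= first_exceed g a)%E.
Proof. by apply/ereal_infP => _ [t [t0 _] <-]; rewrite lee_fin. Qed.

Lemma first_exceed_le t : 0 <= t -> a < g t -> (first_exceed g a <= t%:E)%E.
Proof. by move=> t0 at0; apply: ge_ereal_inf; exists t%:E => //; exists t. Qed.

Lemma first_exceed_ltP (x : \bar R) : (first_exceed g a < x)%E <->
  exists t, [/\ 0 <= t, a < g t & (t%:E < x)%E].
Proof.
split; first by move=> /ereal_inf_lt [_ [t [t0 at0] <-] tx]; exists t.
by case=> t [t0 at0 tx]; apply: le_lt_trans tx; apply: first_exceed_le.
Qed.

Variable s : R.
Hypothesis gs : first_exceed g a = s%:E.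

Lemma le_before_first_exceed t : 0 <= t -> t < s -> g t <= a.
Proof.
move=> t0 ts; rewrite leNgt; apply/negP => at0.
by have := first_exceed_le t0 at0; rewrite gs lee_fin leNgt ts.
Qed.

Lemma gt_near_first_exceed e : 0 < e -> exists t, [/\ s <= t, t < s + e & a < g t].
Proof.
move=> e0; have : (first_exceed g a < (s + e)%:E)%E by rewrite gs lte_fin ltrDl.
move=> /first_exceed_ltP [t [t0 at0 tx]]; exists t; split => //.
by rewrite -lee_fin -gs first_exceed_le.
Qed.

End first_exceed.

Section drawup_at_first_exceed.
Variable R : realType.
Variable f : R -> R.
Hypothesis fc : cadlag f.
Hypothesis fj : no_positive_jumps f.
Variables b s : R.
Hypothesis fs : first_exceed (drawup f) b = s%:E.

Let s0 : 0 <= s.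
Proof. by rewrite -lee_fin -fs first_exceed_ge0. Qed.

Let drawup_le_before t : 0 <= t -> t < s -> drawup f t <= b.
Proof. exact: (le_before_first_exceed fs). Qed.

(* The drawup cannot jump upwards: a jump of it would be a positive jump of f
   or a downward jump of the running infimum, which only moves with f. *)
Lemma drawup_first_exceed_le : 0 < b -> drawup f s <= b.
Proof.
move=> b0.
have [->|sneq0] := eqVneq s 0.
  suff h : f 0 <= run_inf f 0 by rewrite /drawup; lra.
  by apply: run_inf_ge => // x x0 x0'; have -> : x = 0 by apply/eqP; rewrite eq_le x0 x0'.
have sp : 0 < s by rewrite lt_neqAle eq_sym sneq0 s0.
apply/ler_addgt0Pr => e e0.
set L := lim (f x @[x --> s^'-]).
have jump := fj sp; rewrite -/L in jump.
have /cvgrPdist_lt /(_ e e0) /near_left_itv [d d0 Hd] := fc.2 s sp.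
pose t := Num.max (s - d / 2) (s / 2).
have ts : t < s by rewrite gt_max; apply/andP; split; lra.
have dt : s - d < t by rewrite lt_max; apply/orP; left; lra.
have t0 : 0 <= t by rewrite le_max; apply/orP; right; lra.
have Ht := drawup_le_before t0 ts; rewrite /drawup in Ht.
have /andP[Lt1 Lt2] : L - e < f t < L + e by rewrite -ltr_distlC Hd.
suff h : f s - (b + e) <= run_inf f s by rewrite /drawup; lra.
apply: run_inf_ge => // x x0 xs.
have [xt|tx] := leP x t; first by have := run_inf_le fc x0 xt; lra.
have [xs'|sx] := ltP x s.
  have /andP[] : L - e < f x < L + e by rewrite -ltr_distlC Hd // (lt_trans dt).
  lra.
have -> : x = s by apply/eqP; rewrite eq_le xs sx.
lra.
Qed.

Lemma drawup_first_exceed_ge : 0 < b -> b <= drawup f s.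
Proof.
move=> b0; rewrite leNgt; apply/negP => Hs.
pose e := Num.min (b - drawup f s) (b / 2).
have e0 : 0 < e by rewrite lt_min; apply/andP; split; lra.
have e1 : e <= b - drawup f s by rewrite ge_min lexx.
have e2 : e <= b / 2 by rewrite ge_min lexx orbT.
have /cvgrPdist_lt /(_ e e0) /near_right_itv [d d0 Hd] := fc.1 s s0.
have [t [st tsd bt]] := gt_near_first_exceed fs d0.
have stl : s < t.
  by rewrite lt_neqAle st andbT; apply: contraTneq bt => <-; rewrite -leNgt ltW.
have /andP[h1 h2] : f s - e < f t < f s + e by rewrite -ltr_distlC Hd.
suff h : f t - b <= run_inf f t by move: bt; rewrite /drawup; lra.
apply: run_inf_ge => [|x x0 xt]; first exact: le_trans s0 st.
have [xs|sx] := leP x s.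
  by have := run_inf_le fc x0 xs; move: e1; rewrite /drawup; lra.
have /andP[] : f s - e < f x < f s + e by rewrite -ltr_distlC Hd // (le_lt_trans xt).
lra.
Qed.

Lemma drawup_first_exceed : 0 < b -> drawup f s = b.
Proof. by move=> b0; apply/eqP; rewrite eq_le drawup_first_exceed_le ?drawup_first_exceed_ge. Qed.

Lemma first_exceed_drawdown_ltP a : 0 < b -> b <= a ->
  (first_exceed (drawdown f) a < s%:E)%E <-> a - b < drawdown f s.
Proof.
move=> b0 ba; have Hs := drawup_first_exceed b0; rewrite /drawup in Hs; rewrite /drawdown.
split.
  move=> /first_exceed_ltP [t [t0 at0 ts]]; rewrite lte_fin in ts; rewrite /drawdown in at0.
  have := run_inf_le fc t0 (ltW ts).
  have : run_sup f t <= run_sup f s.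
    by apply: run_sup_le => // x x0 xt; apply: run_sup_ge => //; lra.
  lra.
move=> hY.
pose ep := run_sup f s - run_inf f s - a.
have ep0 : 0 < ep by rewrite /ep; lra.
pose dl := Num.min (ep / 2) b.
have dl0 : 0 < dl by rewrite lt_min; apply/andP; split; lra.
have dl1 : dl <= ep / 2 by rewrite ge_min lexx.
have dl2 : dl <= b by rewrite ge_min lexx orbT.
have [u [u0 us hu]] := run_inf_adherent fc s0 dl0.
have ep2 : 0 < ep / 2 by lra.
have [v [v0 vs hv]] := run_sup_adherent fc s0 ep2.
have uls : u < s by rewrite lt_neqAle us andbT; apply: contraTneq hu => ->; lra.
have [vu|uv] := leP v u.
  apply/first_exceed_ltP; exists u; split; [done| |by rewrite lte_fin].
  by rewrite /drawdown; have := run_sup_ge fc v0 vu; rewrite /ep in hu hv dl1; lra.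
exfalso; have infv := run_inf_le fc u0 (ltW uv).
have [vls|sv] := ltP v s.
  by have := drawup_le_before v0 vls; rewrite /drawup /ep in hu hv dl1 *; lra.
have evs : v = s by apply/eqP; rewrite eq_le vs sv.
by rewrite evs in hv infv; rewrite /ep in hu hv dl1; lra.
Qed.

End drawup_at_first_exceed.

Lemma first_exceed_drawup_lt_pinfty (R : realType) (f : R -> R) (b u v : R) :
  cadlag f -> 0 <= u -> u <= v -> b < f v - f u -> (first_exceed (drawup f) b < +oo)%E.
Proof.
move=> fc u0 uv buv; apply: (@le_lt_trans _ _ v%:E) (ltey _).
apply: first_exceed_le; first exact: le_trans uv.
by have := run_inf_le fc u0 uv; rewrite /drawup; lra.
Qed.

Section grid.
Variable R : realType.

Lemma truncn_grid_approx (x : R) (k : nat) : 0 <= x ->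
  let g := (Num.truncn (x * k.+1%:R)).+1%:R / k.+1%:R in
  x < g /\ g <= x + 1 / k.+1%:R.
Proof.
move=> x0 g; have k0 : (0 : R) < k.+1%:R by rewrite ltr0n.
have /andP[h1 h2] := Num.Theory.truncn_itv (mulr_ge0 x0 (ltW k0)).
split; first by rewrite /g ltr_pdivlMr.
by rewrite /g ler_pdivrMr // mulrDl mul1r mulVf ?gt_eqF // -natr1 lerD2r.
Qed.

(* Each point is approached from the right by points of the grid (1/(k+1))N. *)
Lemma nonincreasing_of_grid (f : R -> R) :
  (forall t, 0 <= t -> f x @[x --> t^'+] --> f t) ->
  (forall k i j : nat, (i <= j)%N -> f (j%:R / k.+1%:R) <= f (i%:R / k.+1%:R)) ->
  forall s t, 0 <= s -> s <= t -> f t <= f s.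
Proof.
move=> fr H s t s0 st; rewrite leNgt; apply/negP => hlt.
pose e := (f t - f s) / 2.
have e0 : 0 < e by rewrite /e; lra.
have t0 : 0 <= t by lra.
have /cvgrPdist_lt /(_ e e0) /near_right_itv [ds ds0 Hs] := fr s s0.
have /cvgrPdist_lt /(_ e e0) /near_right_itv [dt dt0 Ht] := fr t t0.
pose m := Num.min ds dt.
have m0 : 0 < m by rewrite lt_min ds0 dt0.
have mds : m <= ds by rewrite ge_min lexx.
have mdt : m <= dt by rewrite ge_min lexx orbT.
pose k := Num.truncn (1 / m).
have k0 : (0 : R) < k.+1%:R by rewrite ltr0n.
have km : 1 / k.+1%:R < m.
  by rewrite ltr_pdivrMr // mulrC -ltr_pdivrMr //; exact: Num.Theory.truncnS_gt.
have [gs1 gs2] := truncn_grid_approx k s0.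
have [gt1 gt2] := truncn_grid_approx k t0.
have hij : ((Num.truncn (s * k.+1%:R)).+1 <= (Num.truncn (t * k.+1%:R)).+1)%N.
  by rewrite ltnS le_truncn // ler_pM2r.
have := H k _ _ hij.
set gs := _.+1%:R / _ in gs1 gs2 *; set gt := _.+1%:R / _ in gt1 gt2 *.
set iK := 1 / k.+1%:R in km gs2 gt2; clearbody gs gt iK.
have := Hs gs gs1 ltac:(lra); rewrite ltr_distlC => /andP[h1 h2].
have := Ht gt gt1 ltac:(lra); rewrite ltr_distlC => /andP[h3 h4].
rewrite /e in h1 h2 h3 h4; lra.
Qed.

End grid.

Section real_sequences.
Variable R : realType.

Lemma sum_increments_ge (h : nat -> R) (c : R) (n : nat) :
  (forall i, (i < n)%N -> c <= h i.+1 - h i) -> n%:R * c <= h n - h 0%N.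
Proof.
move=> hc; rewrite -(telescope_sumr h (leq0n n)) big_mkord.
have -> : n%:R * c = \sum_(i < n) c by rewrite sumr_const card_ord mulr_natl.
by apply: ler_sum => i _; apply: hc.
Qed.

Lemma le0_of_le_inv_succ (x : R) : (forall m : nat, x <= 1 / m.+1%:R) -> x <= 0.
Proof.
move=> h; rewrite leNgt; apply/negP => x0.
have := h (Num.truncn (1 / x)); rewrite leNgt => /negP; apply.
by rewrite ltr_pdivrMr ?ltr0n // mulrC -ltr_pdivrMr //; exact: Num.Theory.truncnS_gt.
Qed.

Lemma ereal_le_geometric_eq0 (x : \bar R) (z : R) : (0 <= x)%E -> 0 <= z -> z < 1 ->
  (forall n, x <= (z ^+ n)%:E)%E -> x = 0%E.
Proof.
move=> x0 z0 z1 h.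
have xf : x \is a fin_num.
  by rewrite ge0_fin_numE // (le_lt_trans (h 0%N)) // expr0 ltey.
rewrite -(fineK xf); congr _%:E; apply/eqP; rewrite eq_le -[0 <= _]lee_fin fineK // x0 andbT.
rewrite leNgt; apply/negP => xpos.
have normz : `|z| < 1 by rewrite ger0_norm.
have /cvgrPdist_lt /(_ _ xpos) [N _ HN] := cvg_expr normz.
have := HN N (leqnn N); rewrite sub0r normrN ger0_norm ?exprn_ge0 // => zN.
by have := h N; rewrite -(fineK xf) lee_fin leNgt zN.
Qed.

Lemma mem_set_itv_oy (c x : R) : (x \in `]c, +oo[%classic) = (c < x).
Proof. by apply/idP/idP; rewrite in_setE /= in_itv /= andbT. Qed.

Lemma mem_set_itv_Ny (c x : R) : (x \in `]-oo, c]%classic) = (x <= c).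
Proof. by apply/idP/idP; rewrite in_setE /= in_itv. Qed.

End real_sequences.

Section increments.
Context {d : measure_display} {T : measurableType d} {R : realType}.
Variable P : probability T R.
Variable X : R -> T -> R.
Hypothesis Xm : forall t, measurable_fun setT (X t).
Hypothesis Xst : stationary_increments P X.
Hypothesis Xind : independent_increments P X.

Lemma measurable_level t (B : set R) : measurable B -> measurable [set w | X t w \in B].
Proof.
move=> mB; have := Xm t measurableT mB.
by rewrite setTI; congr measurable; apply/seteqP; split => w /=; rewrite inE.
Qed.

Lemma measurable_increment t s (B : set R) : measurable B ->
  measurable [set w | X t w - X s w \in B].
Proof.
move=> mB; have := measurable_funB (Xm t) (Xm s) measurableT mB.
by rewrite setTI; congr measurable; apply/seteqP; split => w /=; rewrite inE.
Qed.

Lemma prob_grid_increments (L : R) (B : set R) (n : nat) : 0 <= L -> measurable B ->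
  P (\bigcap_(i in [set k | (k < n)%N]) [set w | X (i.+1%:R * L) w - X (i%:R * L) w \in B])
  = (P [set w | X L w \in B] ^+ n)%E.
Proof.
move=> L0 mB.
have grid_le i : i%:R * L <= i.+1%:R * L by rewrite ler_wpM2r // ler_nat.
rewrite (@Xind n (fun i => i%:R * L) (fun _ => B)) ?mul0r //.
rewrite (eq_bigr (fun _ => P [set w | X L w \in B])); last first.
  move=> i _; rewrite Xst ?mulr_ge0 //.
  by rewrite -mulrBl -natrB // subSnn mul1r.
by rewrite big_const_ord; elim: n => [|n IH] //; rewrite iterS IH -expeS.
Qed.

(* If X never exceeds the level b, no increment can be positive with positive
   probability: n independent copies of it would add up above b. *)
Lemma increment_gt_null (b : R) :
  (forall L, 0 <= L -> P [set w | X L w \in `]b, +oo[%classic] = 0%E) ->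
  forall s t c, 0 <= s -> s <= t -> 0 < c ->
  P [set w | X t w - X s w \in `]c, +oo[%classic] = 0%E.
Proof.
move=> null s t c s0 st c0; rewrite Xst //.
have u0 : 0 <= t - s by rewrite subr_ge0.
set u := t - s in u0 *; set p := P _.
apply/eqP; rewrite eq_le measure_ge0 andbT leNgt; apply/negP => pp.
pose n := (Num.truncn (`|b| / c)).+1.
have bn : `|b| < n%:R * c by rewrite -ltr_pdivrMr //; exact: Num.Theory.truncnS_gt.
pose A := \bigcap_(i in [set k | (k < n)%N])
  [set w | X (i.+1%:R * u) w - X (i%:R * u) w \in `]c, +oo[%classic].
pose B := [set w | X (n%:R * u) w - X 0 w \in `]b, +oo[%classic].
have : (P A <= P B)%E.
  apply: le_measure; rewrite ?inE.
  - apply: bigcap_measurableType => k _; exact: measurable_increment (measurable_itv _).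
  - exact: measurable_increment (measurable_itv _).
  move=> w hw; rewrite /B /= mem_set_itv_oy.
  apply: le_lt_trans (ler_norm b) _; apply: lt_le_trans bn _.
  have := @sum_increments_ge _ (fun k => X (k%:R * u) w) c n; rewrite mul0r; apply.
  by move=> i ni; have := hw i ni; rewrite /= mem_set_itv_oy => /ltW.
rewrite /A /B prob_grid_increments ?measurable_itv // Xst ?subr0 ?null ?mulr_ge0 //.
by rewrite leNgt expe_gt0.
Qed.

Lemma ae_grid_nonincreasing (b : R) :
  (forall L, 0 <= L -> P [set w | X L w \in `]b, +oo[%classic] = 0%E) ->
  \forall w \ae P, forall k i j : nat, (i <= j)%N ->
     X (j%:R / k.+1%:R) w <= X (i%:R / k.+1%:R) w.
Proof.
move=> null.
have small k i j m : \forall w \ae P, (i <= j)%N ->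
    X (j%:R / k.+1%:R) w - X (i%:R / k.+1%:R) w <= 1 / m.+1%:R.
  have [ij|ji] := leqP i j; last exact: aeW.
  exists [set w | X (j%:R / k.+1%:R) w - X (i%:R / k.+1%:R) w \in `](1 / m.+1%:R), +oo[%classic].
  split; first exact: measurable_increment (measurable_itv _).
    apply: (increment_gt_null null); first by rewrite divr_ge0.
      by rewrite ler_pM2r ?invr_gt0 ?ltr0n // ler_nat.
    by rewrite divr_gt0 ?ltr0n.
  by move=> w /= hw; rewrite mem_set_itv_oy ltNge; apply/negP => hle; apply: hw.
have := ae_foralln (fun k => ae_foralln (fun i => ae_foralln (fun j =>
  ae_foralln (fun m => small k i j m)))).
apply: filterS => w hw k i j ij; rewrite -subr_le0; apply: le0_of_le_inv_succ => m.
exact: hw.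
Qed.

End increments.

Lemma not_ae_False {d : measure_display} {T : measurableType d} {R : realType}
  (P : probability T R) : ~ (\forall w \ae P, False).
Proof.
have PT : (0 < P setT)%E by rewrite probability_setT lte01.
exact: (@filter_const _ _ (ae_properfilter_algebraOfSetsType PT)).
Qed.

Section first_exceed_fin.
Context {d : measure_display} {T : measurableType d} {R : realType}.
Variable P : probability T R.
Variable X : R -> T -> R.
Hypothesis Xm : forall t, measurable_fun setT (X t).
Hypothesis Xst : stationary_increments P X.
Hypothesis Xind : independent_increments P X.
Hypothesis Xcad : {ae P, forall w, cadlag (X ^~ w)}.

Lemma exists_level_gt_pos_prob (b : R) : {ae P, forall w, ~ monotone_path (X ^~ w)} ->
  exists2 L : R, 0 <= L & (0 < P [set w | X L w \in `]b, +oo[%classic])%E.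
Proof.
move=> Xnm; apply: contrapT => /forall2NP null.
have {}null L : 0 <= L -> P [set w | X L w \in `]b, +oo[%classic] = 0%E.
  move=> L0; apply/eqP; rewrite eq_le measure_ge0 andbT leNgt.
  by case: (null L) => // /negP.
apply: (@not_ae_False _ _ _ P).
apply: filterS3 (ae_grid_nonincreasing Xm Xst Xind null) Xcad Xnm.
by move=> w grid wc; apply; right; apply: nonincreasing_of_grid wc.1 grid.
Qed.

Lemma ae_exists_grid_increment_gt (b L : R) : 0 <= L ->
  (0 < P [set w | X L w \in `]b, +oo[%classic])%E ->
  \forall w \ae P, exists k : nat, b < X (k.+1%:R * L) w - X (k%:R * L) w.
Proof.
move=> L0 qpos; set q := P _ in qpos.
have q1 : (q <= 1)%E by apply: probability_le1; exact: measurable_level (measurable_itv _).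
have qf : q \is a fin_num by rewrite ge0_fin_numE ?(le_lt_trans q1) ?ltey // ltW.
have low : P [set w | X L w \in `]-oo, b]%classic] = (1 - fine q)%:E.
  rewrite EFinB fineK // -probability_setC; last exact: measurable_level (measurable_itv _).
  by congr (P _); apply/seteqP; split => w /=; rewrite mem_set_itv_Ny mem_set_itv_oy leNgt => /negP.
have q0 : 0 < fine q by rewrite -lte_fin fineK.
have q1' : fine q <= 1 by rewrite -lee_fin fineK.
exists (\bigcap_(k in [set: nat])
  [set w | X (k.+1%:R * L) w - X (k%:R * L) w \in `]-oo, b]%classic]).
split.
- by apply: bigcap_measurableType => k _; exact: measurable_increment (measurable_itv _).
- apply: (@ereal_le_geometric_eq0 _ _ (1 - fine q)); [exact: measure_ge0|lra|lra|] => n.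
  rewrite EFin_expe -low -prob_grid_increments //; apply: le_measure; rewrite ?inE.
  + by apply: bigcap_measurableType => k _; exact: measurable_increment (measurable_itv _).
  + by apply: bigcap_measurableType => k _; exact: measurable_increment (measurable_itv _).
  + by move=> w hw k _; exact: hw.
- move=> w /= hw k _; rewrite /= mem_set_itv_Ny leNgt; apply/negP => hk.
  by apply: hw; exists k.
Qed.

Lemma ae_first_exceed_drawup_fin (b : R) : {ae P, forall w, ~ monotone_path (X ^~ w)} ->
  \forall w \ae P, (first_exceed (drawup (X ^~ w)) b < +oo)%E.
Proof.
move=> Xnm; have [L L0 qpos] := exists_level_gt_pos_prob b Xnm.
apply: filterS2 (ae_exists_grid_increment_gt L0 qpos) Xcad => w [k hk] wc.
apply: first_exceed_drawup_lt_pinfty wc _ _ hk; first by rewrite mulr_ge0.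
by rewrite ler_wpM2r // ler_nat.
Qed.

End first_exceed_fin.

Theorem lemma1 (d : measure_display) (T : measurableType d) (R : realType)
  (P : probability T R) (X : R -> T -> R) :
  is_spec_neg_levy_nonmonotone P X ->
  forall a b : R, 0 < b -> b <= a ->
  {ae P, forall w,
     (tau X a w < tauhat X b w)%E <->
     ((tauhat X b w < +oo)%E /\ a - b < drawdown (X ^~ w) (fine (tauhat X b w)))}.
Proof.
move=> [[Xm [_ [Xcad [Xst Xind]]]] [Xnj Xnm]] a b b0 ba.
have fin := ae_first_exceed_drawup_fin Xm Xst Xind Xcad b Xnm.
apply: filterS3 fin Xcad Xnj => w finw wc wj; rewrite /tau /tauhat.
have fs : first_exceed (drawup (X ^~ w)) b = (fine (first_exceed (drawup (X ^~ w)) b))%:E.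
  by rewrite fineK // ge0_fin_numE // first_exceed_ge0.
rewrite fs /= (first_exceed_drawdown_ltP wc wj fs b0 ba).
by split=> [|[]//]; split=> //; exact: ltey.
Qed.
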